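(* For $1\le m\le n$, $m\,E_m\!\left[\frac1\ell\right]+\sum_{j=1}^{m-1}E_m\!\left[\frac{\tau_j}{\ell}\right]=1$.
   Context: $\mathbf X=\{X_1,\dots,X_n\}$ with the uniform measure. $\mathcal X_m$ is the set of finite sequences $\chi=(\chi_1,\dots,\chi_\ell)$ of elements of $\mathbf X$ having exactly $m$ distinct entries and with $\chi_\ell$ different from all earlier entries; $\ell(\chi)$ is its length and $\chi$ has probability $n^{-\ell(\chi)}$; $E_m[f]=\sum_{\chi\in\mathcal X_m}f(\chi)n^{-\ell(\chi)}$. For $0\le j\le m$, $t_j(\chi)$ is the least $t\ge0$ with $|\{\chi_1,\dots,\chi_t\}|=j$, and $\tau_j(\chi)=t_{j+1}(\chi)-t_j(\chi)-1$ for $1\le j\le m-1$. *)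

From Stdlib Require Import Reals List Arith.
Import ListNotations.
Open Scope R_scope.

(* The ground set X = {X_1,...,X_n} is encoded as {0,...,n-1} (nat). *)

Fixpoint all_seqs (n L : nat) : list (list nat) :=
  match L with
  | O => [[]]
  | S L' => flat_map (fun s => map (fun x => x :: s) (seq 0 n)) (all_seqs n L')
  end.

Definition ndistinct (s : list nat) : nat := length (nodup Nat.eq_dec s).

Definition in_Xm (m : nat) (s : list nat) : bool :=
  match s with
  | [] => false
  | _ :: _ =>
      Nat.eqb (ndistinct s) m &&
      negb (existsb (Nat.eqb (last s 0%nat)) (removelast s))
  end.

(* t_j(chi): least t >= 0 with |{chi_1,...,chi_t}| = j
   (searched among t = 0..length chi; defined for j <= m). *)
Fixpoint find_t (j : nat) (s : list nat) (t fuel : nat) : nat :=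
  match fuel with
  | O => t
  | S f => if Nat.eqb (ndistinct (firstn t s)) j then t
           else find_t j s (S t) f
  end.

Definition t_ (j : nat) (s : list nat) : nat := find_t j s 0 (S (length s)).

Definition tau (j : nat) (s : list nat) : R :=
  INR (t_ (S j) s) - INR (t_ j s) - 1.

Definition sumR (l : list R) : R := fold_right Rplus 0 l.

Definition Em_slice (n m : nat) (f : list nat -> R) (L : nat) : R :=
  sumR (map (fun s => f s * (/ INR n) ^ L)
            (filter (in_Xm m) (all_seqs n L))).

(* E_m[f] = v : the (nonnegative-term) series sum_chi f(chi) n^{-l(chi)},
   grouped by length, converges to v. *)
Definition Em_sum (n m : nat) (f : list nat -> R) (v : R) : Prop :=
  infinite_sum (Em_slice n m f) v.

Definition ell (s : list nat) : R := INR (length s).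

From Stdlib Require Import Reals List Lia Lra.
Import ListNotations.
Open Scope R_scope.

(* For every chi in X_m the hitting times satisfy t_1 = 1 and
   t_m = l(chi), so the tau_j telescope:
     m / l + sum_{j=1}^{m-1} tau_j / l = (m + t_m - t_1 - (m-1)) / l = 1.
   Hence the left-hand side equals E_m[1], the probability that uniform
   draws from X eventually show m distinct values, and it remains to prove
   E_m[1] = 1.  A sequence lies in X_m exactly when it reaches m distinct
   entries at its last step, so the partial sums of E_m[1] up to length N
   equal P(N draws show at least m distinct values) = 1 - P(fewer), and by a
   union bound over the missing values, P(fewer) <= n ((n-1)/n)^N -> 0.
   The file develops, in order: finite sums over lists and over all
   sequences of a given length; counting distinct entries; the hitting
   times and the pointwise identity; the computation E_m[1] = 1; existence
   and linearity of E_m for bounded functions; and finally the theorem. *)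

Lemma sumR_app (l1 l2 : list R) : sumR (l1 ++ l2) = sumR l1 + sumR l2.
Proof. induction l1 as [|x l1 IH]; simpl; [ring | rewrite IH; ring]. Qed.

Lemma sumR_map_plus {A} (f g : A -> R) (l : list A) :
  sumR (map (fun x => f x + g x) l) = sumR (map f l) + sumR (map g l).
Proof. induction l as [|x l IH]; simpl; [ring | rewrite IH; ring]. Qed.

Lemma sumR_map_scal {A} (c : R) (f : A -> R) (l : list A) :
  sumR (map (fun x => c * f x) l) = c * sumR (map f l).
Proof. induction l as [|x l IH]; simpl; [ring | rewrite IH; ring]. Qed.

Lemma sumR_map_ext_in {A} (f g : A -> R) (l : list A) :
  (forall x, In x l -> f x = g x) -> sumR (map f l) = sumR (map g l).
Proof.
  induction l as [|x l IH]; intro H; simpl; [reflexivity|].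
  rewrite (H x (in_eq x l)), IH; [reflexivity|].
  intros y Hy; apply H, in_cons, Hy.
Qed.

Lemma sumR_map_ext {A} (f g : A -> R) (l : list A) :
  (forall x, f x = g x) -> sumR (map f l) = sumR (map g l).
Proof. intro H; apply sumR_map_ext_in; auto. Qed.

Lemma sumR_map_const {A} (c : R) (l : list A) :
  sumR (map (fun _ => c) l) = INR (length l) * c.
Proof.
  induction l as [|x l IH]; simpl length; rewrite ?S_INR; simpl; [ring | rewrite IH; ring].
Qed.

Lemma sumR_map_le_in {A} (f g : A -> R) (l : list A) :
  (forall x, In x l -> f x <= g x) -> sumR (map f l) <= sumR (map g l).
Proof.
  induction l as [|x l IH]; intro H; simpl; [lra|].
  pose proof (H x (in_eq x l)).
  assert (sumR (map f l) <= sumR (map g l)) by (apply IH; intros y Hy; apply H, in_cons, Hy).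
  lra.
Qed.

Lemma sumR_map_le {A} (f g : A -> R) (l : list A) :
  (forall x, f x <= g x) -> sumR (map f l) <= sumR (map g l).
Proof. intro H; apply sumR_map_le_in; auto. Qed.

Lemma sumR_map_nonneg_in {A} (f : A -> R) (l : list A) :
  (forall x, In x l -> 0 <= f x) -> 0 <= sumR (map f l).
Proof.
  intro H. replace 0 with (sumR (map (fun _ => 0) l)) at 1 by (rewrite sumR_map_const; ring).
  apply sumR_map_le_in; exact H.
Qed.

Lemma sumR_map_nonneg {A} (f : A -> R) (l : list A) :
  (forall x, 0 <= f x) -> 0 <= sumR (map f l).
Proof. intro H; apply sumR_map_nonneg_in; auto. Qed.

Lemma sumR_map_ge_term {A} (f : A -> R) (l : list A) (x : A) :
  (forall y, 0 <= f y) -> In x l -> f x <= sumR (map f l).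
Proof.
  intros H Hx; induction l as [|y l IH]; simpl in *; [contradiction|].
  pose proof (sumR_map_nonneg f l H); pose proof (H y).
  destruct Hx as [<-|Hx]; [lra | specialize (IH Hx); lra].
Qed.

Lemma sumR_swap {A B} (h : A -> B -> R) (l1 : list A) (l2 : list B) :
  sumR (map (fun a => sumR (map (fun b => h a b) l2)) l1) =
  sumR (map (fun b => sumR (map (fun a => h a b) l1)) l2).
Proof.
  induction l1 as [|a l1 IH]; simpl.
  - rewrite sumR_map_const; ring.
  - rewrite IH, <- sumR_map_plus; reflexivity.
Qed.

Lemma sumR_flat_map {A B} (g : B -> R) (F : A -> list B) (l : list A) :
  sumR (map g (flat_map F l)) = sumR (map (fun a => sumR (map g (F a))) l).
Proof.
  induction l as [|a l IH]; simpl; [reflexivity|].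
  rewrite map_app, sumR_app, IH; reflexivity.
Qed.

(* Sums over all sequences of length L with entries in {0,...,n-1};
   divided by n^L this is the expectation under L uniform draws. *)
Definition SL (n L : nat) (g : list nat -> R) : R := sumR (map g (all_seqs n L)).

Lemma SL_ext (n L : nat) (f g : list nat -> R) :
  (forall s, f s = g s) -> SL n L f = SL n L g.
Proof. intro; unfold SL; now apply sumR_map_ext. Qed.

Lemma SL_plus (n L : nat) (f g : list nat -> R) :
  SL n L (fun s => f s + g s) = SL n L f + SL n L g.
Proof. apply sumR_map_plus. Qed.

Lemma SL_le (n L : nat) (f g : list nat -> R) :
  (forall s, f s <= g s) -> SL n L f <= SL n L g.
Proof. apply sumR_map_le. Qed.

Lemma SL_S_cons (n L : nat) (g : list nat -> R) :
  SL n (S L) g = SL n L (fun s => sumR (map (fun x => g (x :: s)) (seq 0 n))).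
Proof.
  unfold SL; simpl. rewrite sumR_flat_map.
  apply sumR_map_ext; intro s. now rewrite map_map.
Qed.

Lemma SL_S_app (n L : nat) (g : list nat -> R) :
  SL n (S L) g = SL n L (fun s => sumR (map (fun x => g (s ++ [x])) (seq 0 n))).
Proof.
  revert g; induction L as [|L IH]; intro g.
  - rewrite SL_S_cons; reflexivity.
  - rewrite SL_S_cons, IH, SL_S_cons.
    apply SL_ext; intro s. apply sumR_swap.
Qed.

Lemma SL_const (n L : nat) (c : R) : SL n L (fun _ => c) = INR n ^ L * c.
Proof.
  revert c; induction L as [|L IH]; intro c.
  - unfold SL; simpl; ring.
  - rewrite SL_S_cons, (SL_ext _ _ _ (fun _ => INR n * c)).
    + rewrite IH; simpl; ring.
    + intro; rewrite sumR_map_const, length_seq; ring.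
Qed.

Lemma mem_iff (x : nat) (s : list nat) : existsb (Nat.eqb x) s = true <-> In x s.
Proof.
  rewrite existsb_exists. split.
  - intros [y [Hy Hb]]. apply Nat.eqb_eq in Hb; subst; auto.
  - intro H; exists x; split; auto; apply Nat.eqb_refl.
Qed.

Lemma ndistinct_ge_of_nodup (l s : list nat) :
  NoDup l -> incl l s -> (length l <= ndistinct s)%nat.
Proof.
  intros H Hi. apply NoDup_incl_length; auto.
  intros x Hx. apply nodup_In; auto.
Qed.

Lemma ndistinct_mono (l s : list nat) : incl l s -> (ndistinct l <= ndistinct s)%nat.
Proof.
  intro Hi. apply ndistinct_ge_of_nodup; [apply NoDup_nodup|].
  intros x Hx. apply Hi. eapply nodup_In; eauto.
Qed.

Lemma ndistinct_app_in (s : list nat) (x : nat) :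
  In x s -> ndistinct (s ++ [x]) = ndistinct s.
Proof.
  intro H. apply Nat.le_antisymm; apply ndistinct_mono; intros y Hy.
  - apply in_app_or in Hy; destruct Hy as [Hy|[<-|[]]]; auto.
  - apply in_or_app; auto.
Qed.

Lemma ndistinct_app_notin (s : list nat) (x : nat) :
  ~ In x s -> ndistinct (s ++ [x]) = S (ndistinct s).
Proof.
  intro H. change (S (ndistinct s)) with (length (x :: nodup Nat.eq_dec s)).
  apply Nat.le_antisymm.
  - apply NoDup_incl_length; [apply NoDup_nodup|].
    intros y Hy. apply nodup_In, in_app_or in Hy.
    destruct Hy as [Hy|[<-|[]]]; [right; apply nodup_In; auto | left; auto].
  - apply ndistinct_ge_of_nodup.
    + constructor; [rewrite nodup_In; auto | apply NoDup_nodup].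
    + intros y [<-|Hy]; apply in_or_app; [right; left; auto | left; eapply nodup_In; eauto].
Qed.

Lemma in_Xm_app (m : nat) (s : list nat) (x : nat) :
  in_Xm m (s ++ [x]) =
  (Nat.eqb (ndistinct (s ++ [x])) m && negb (existsb (Nat.eqb x) s))%bool.
Proof. unfold in_Xm. rewrite last_last, removelast_last. destruct s; reflexivity. Qed.

Definition ind (b : bool) : R := if b then 1 else 0.

Lemma ind_nonneg (b : bool) : 0 <= ind b.
Proof. destruct b; simpl; lra. Qed.

Lemma sum_ind_neq_notin (x : nat) (l : list nat) : ~ In x l ->
  sumR (map (fun y => ind (negb (Nat.eqb x y))) l) = INR (length l).
Proof.
  induction l as [|y l IH]; intro Hx; [reflexivity|].
  cbn [map sumR fold_right length]. rewrite S_INR.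
  fold (sumR (map (fun y => ind (negb (Nat.eqb x y))) l)).
  rewrite IH by (intro; apply Hx; right; assumption).
  destruct (Nat.eqb_spec x y); [subst; exfalso; apply Hx; left; reflexivity|].
  simpl; ring.
Qed.

Lemma sum_ind_neq_in (x : nat) (l : list nat) : NoDup l -> In x l ->
  sumR (map (fun y => ind (negb (Nat.eqb x y))) l) = INR (length l) - 1.
Proof.
  induction 1 as [|y l Hy Hl IH]; intro Hx; [destruct Hx|].
  cbn [map sumR fold_right length]. rewrite S_INR.
  fold (sumR (map (fun y => ind (negb (Nat.eqb x y))) l)).
  destruct (Nat.eqb_spec x y) as [->|Hne].
  - rewrite sum_ind_neq_notin by assumption. simpl; ring.
  - rewrite IH by (destruct Hx; [congruence | assumption]). simpl; ring.
Qed.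

(* X_m consists of the sequences reaching m distinct entries exactly at their
   last step: [m <= nd(s x)] = [m <= nd s] + [s x in X_m]. *)
Lemma threshold_step (m : nat) (s : list nat) (x : nat) :
  ind (Nat.leb m (ndistinct (s ++ [x]))) =
  ind (Nat.leb m (ndistinct s)) + ind (in_Xm m (s ++ [x])).
Proof.
  rewrite in_Xm_app. destruct (existsb (Nat.eqb x) s) eqn:E.
  - apply mem_iff in E. rewrite ndistinct_app_in, Bool.andb_false_r by auto. simpl; ring.
  - assert (~ In x s) by (rewrite <- mem_iff; congruence).
    rewrite ndistinct_app_notin, Bool.andb_true_r by auto.
    destruct (Nat.leb_spec m (S (ndistinct s))), (Nat.leb_spec m (ndistinct s)),
      (Nat.eqb_spec (S (ndistinct s)) m); simpl; try lra; lia.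
Qed.

Lemma find_t_spec (j : nat) (s : list nat) (t fuel T : nat) :
  (t <= T < t + fuel)%nat ->
  (forall t', (t <= t' < T)%nat -> ndistinct (firstn t' s) <> j) ->
  ndistinct (firstn T s) = j -> find_t j s t fuel = T.
Proof.
  revert t; induction fuel as [|fuel IH]; intros t HT Hbefore HatT; [lia|].
  simpl. destruct (Nat.eqb_spec (ndistinct (firstn t s)) j) as [Ht|Ht].
  - destruct (Nat.eq_dec t T); auto. exfalso; apply (Hbefore t); auto; lia.
  - apply IH; auto; [|intros; apply Hbefore; lia].
    destruct (Nat.eq_dec t T); subst; [contradiction | lia].
Qed.

Lemma find_t_le (j : nat) (s : list nat) (t fuel : nat) :
  (find_t j s t fuel <= t + fuel)%nat.
Proof.
  revert t; induction fuel as [|fuel IH]; intro t; simpl; [lia|].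
  destruct (Nat.eqb _ _); [lia | specialize (IH (S t)); lia].
Qed.

Lemma t_le_length (j : nat) (s : list nat) : (t_ j s <= S (length s))%nat.
Proof. apply (find_t_le j s 0). Qed.

Lemma t_1_nonempty (x : nat) (s : list nat) : t_ 1 (x :: s) = 1%nat.
Proof.
  unfold t_. apply find_t_spec; simpl length; try lia; [|reflexivity].
  intros t' Ht'. replace t' with 0%nat by lia. discriminate.
Qed.

Lemma t_m_Xm (m : nat) (s : list nat) : in_Xm m s = true -> t_ m s = length s.
Proof.
  intro H. destruct (@exists_last _ s) as [r [x ->]]; [intros ->; discriminate|].
  rewrite in_Xm_app in H. apply andb_prop in H as [Hnd Hx].
  apply Nat.eqb_eq in Hnd. apply Bool.negb_true_iff in Hx.
  assert (Hr : ndistinct (r ++ [x]) = S (ndistinct r))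
    by (apply ndistinct_app_notin; rewrite <- mem_iff; congruence).
  unfold t_. apply find_t_spec; [lia | |].
  - intros t' Ht'. rewrite length_app in Ht'; simpl in Ht'. enough (ndistinct (firstn t' (r ++ [x])) <= ndistinct r)%nat by lia.
    apply ndistinct_mono. rewrite firstn_app.
    replace (t' - length r)%nat with 0%nat by lia. rewrite app_nil_r.
    intros y Hy. rewrite <- (firstn_skipn t' r). apply in_or_app; auto.
  - rewrite firstn_all. assumption.
Qed.

Lemma telescope (T : nat -> R) (c : R) (k : nat) :
  sumR (map (fun j => (T (S j) - T j - 1) / c) (seq 1 k)) = (T (S k) - T 1%nat - INR k) / c.
Proof.
  induction k as [|k IH]; [simpl; unfold Rdiv; ring|].
  rewrite seq_S, map_app, sumR_app, IH, S_INR.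
  replace (1 + k)%nat with (S k) by lia. simpl; unfold Rdiv; ring.
Qed.

Lemma pointwise_identity (m : nat) (s : list nat) : (1 <= m)%nat -> in_Xm m s = true ->
  INR m * / ell s + sumR (map (fun j => tau j s / ell s) (seq 1 (m - 1))) = 1.
Proof.
  intros Hm Hs. destruct s as [|x r]; [discriminate|].
  unfold tau. rewrite (telescope (fun j => INR (t_ j (x :: r)))).
  replace (S (m - 1)) with m by lia.
  rewrite t_m_Xm, t_1_nonempty, minus_INR by auto.
  unfold ell; simpl length; rewrite S_INR. simpl (INR 1).
  pose proof (pos_INR (length r)). field; lra.
Qed.


Lemma ell_ge_1 (s : list nat) : s <> [] -> 1 <= ell s.
Proof.
  destruct s as [|x r]; [congruence|]. intros _.
  unfold ell; simpl length; rewrite S_INR. pose proof (pos_INR (length r)); lra.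
Qed.

Lemma Xm_nonempty (m : nat) (s : list nat) : in_Xm m s = true -> s <> [].
Proof. intros H ->; discriminate. Qed.

Lemma inv_ell_bound (s : list nat) : s <> [] -> Rabs (/ ell s) <= 1.
Proof.
  intro Hs. pose proof (ell_ge_1 s Hs).
  rewrite Rabs_right by (left; apply Rinv_0_lt_compat; lra).
  rewrite <- Rinv_1. apply Rinv_le_contravar; lra.
Qed.

(* |tau_j / l| <= 3, because every hitting time lies in [0, l+1]. *)
Lemma tau_div_ell_bound (j : nat) (s : list nat) : s <> [] -> Rabs (tau j s / ell s) <= 3.
Proof.
  intro Hs. pose proof (ell_ge_1 s Hs) as HL.
  pose proof (le_INR _ _ (t_le_length (S j) s)) as Hj1.
  pose proof (le_INR _ _ (t_le_length j s)) as Hj.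
  pose proof (pos_INR (t_ (S j) s)); pose proof (pos_INR (t_ j s)).
  rewrite S_INR in Hj1, Hj. fold (ell s) in Hj1, Hj.
  unfold tau, Rdiv. apply Rabs_le.
  split; apply Rmult_le_reg_r with (ell s); try lra;
    rewrite Rmult_assoc, Rinv_l by lra; lra.
Qed.

Lemma Em_slice_SL (n m : nat) (f : list nat -> R) (L : nat) :
  Em_slice n m f L = SL n L (fun s => if in_Xm m s then f s * (/ INR n) ^ L else 0).
Proof.
  unfold Em_slice, SL. induction (all_seqs n L) as [|s l IH]; simpl; [reflexivity|].
  destruct (in_Xm m s); simpl; rewrite IH; ring.
Qed.

Lemma SL_avoiding (n : nat) (x : nat) (N : nat) (c : R) : (x < n)%nat ->
  SL n N (fun s => ind (negb (existsb (Nat.eqb x) s)) * c) = (INR n - 1) ^ N * c.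
Proof.
  intro Hx. revert c; induction N as [|N IH]; intro c; [unfold SL; simpl; ring|].
  rewrite SL_S_cons, (SL_ext _ _ _ (fun s => ind (negb (existsb (Nat.eqb x) s)) * ((INR n - 1) * c))).
  - rewrite IH; simpl; ring.
  - intro s. simpl existsb.
    rewrite (sumR_map_ext _ (fun y => ind (negb (existsb (Nat.eqb x) s)) * c * ind (negb (Nat.eqb x y))))
      by (intro y; destruct (Nat.eqb x y), (existsb (Nat.eqb x) s); simpl; ring).
    rewrite sumR_map_scal, sum_ind_neq_in, length_seq; [ring | apply seq_NoDup |].
    apply in_seq; lia.
Qed.

(* Union bound: fewer than m <= n distinct entries forces some value x < n
   to be missing. *)
Lemma union_bound_missing (n m : nat) (s : list nat) : (m <= n)%nat ->
  ind (negb (Nat.leb m (ndistinct s))) <=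
  sumR (map (fun x => ind (negb (existsb (Nat.eqb x) s))) (seq 0 n)).
Proof.
  intro Hmn. destruct (Nat.leb_spec m (ndistinct s)) as [_|Hlt].
  { apply sumR_map_nonneg, (fun _ => ind_nonneg _). }
  destruct (existsb (fun x => negb (existsb (Nat.eqb x) s)) (seq 0 n)) eqn:Ex.
  - apply existsb_exists in Ex as [x [Hx Hmiss]].
    eapply Rle_trans; [| apply (sumR_map_ge_term _ _ x); [intro; apply ind_nonneg | exact Hx]].
    cbv beta; rewrite Hmiss; simpl; lra.
  - exfalso. assert (Hall : incl (seq 0 n) s).
    { intros x Hx. apply mem_iff. destruct (existsb (Nat.eqb x) s) eqn:Hmem; [reflexivity|].
      rewrite <- Ex. apply existsb_exists. exists x. rewrite Hmem; auto. }
    pose proof (ndistinct_ge_of_nodup _ _ (seq_NoDup n 0) Hall).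
    rewrite length_seq in *. lia.
Qed.

Section Termination.
Variables n m : nat.
Hypothesis Hm1 : (1 <= m)%nat.
Hypothesis Hmn : (m <= n)%nat.

Let q := / INR n.

Lemma n_pos : 0 < INR n.
Proof. apply lt_0_INR; lia. Qed.

Lemma n_times_q : INR n * q = 1.
Proof. unfold q; field; pose proof n_pos; lra. Qed.

Lemma q_pow_nonneg (L : nat) : 0 <= q ^ L.
Proof. apply pow_le; left; apply Rinv_0_lt_compat, n_pos. Qed.

(* P(the first L draws show at least m distinct values), and its complement. *)
Definition reached (L : nat) : R := SL n L (fun s => ind (Nat.leb m (ndistinct s)) * q ^ L).
Definition unreached (L : nat) : R := SL n L (fun s => ind (negb (Nat.leb m (ndistinct s))) * q ^ L).

Lemma reached_0 : reached 0 = 0.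
Proof. unfold reached, SL; simpl. destruct m; [lia | simpl; ring]. Qed.

Lemma slice_one_S (L : nat) : Em_slice n m (fun _ => 1) (S L) = reached (S L) - reached L.
Proof.
  rewrite Em_slice_SL. unfold reached. rewrite !SL_S_app.
  rewrite (SL_ext n L (fun s => ind (Nat.leb m (ndistinct s)) * q ^ L)
     (fun s => sumR (map (fun _ => ind (Nat.leb m (ndistinct s)) * q ^ S L) (seq 0 n)))).
  2:{ intro s. rewrite sumR_map_const, length_seq. simpl.
      rewrite <- (Rmult_1_r (ind _ * q ^ L)) at 1. rewrite <- n_times_q. ring. }
  assert (Hsplit : forall s,
    sumR (map (fun x => ind (Nat.leb m (ndistinct (s ++ [x]))) * q ^ S L) (seq 0 n)) =
    sumR (map (fun _ => ind (Nat.leb m (ndistinct s)) * q ^ S L) (seq 0 n)) +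
    sumR (map (fun x => if in_Xm m (s ++ [x]) then 1 * q ^ S L else 0) (seq 0 n))).
  { intro s. rewrite <- sumR_map_plus. apply sumR_map_ext; intro x.
    rewrite threshold_step. destruct (in_Xm m (s ++ [x])); simpl; ring. }
  rewrite (SL_ext _ _ _ _ Hsplit), SL_plus. unfold q. ring.
Qed.

Lemma partial_sums_one (N : nat) : sum_f_R0 (Em_slice n m (fun _ => 1)) N = reached N.
Proof.
  induction N as [|N IH]; simpl.
  - rewrite reached_0; reflexivity.
  - rewrite IH, slice_one_S; ring.
Qed.

Lemma reached_plus_unreached (N : nat) : reached N + unreached N = 1.
Proof.
  unfold reached, unreached. rewrite <- SL_plus, (SL_ext _ _ _ (fun _ => q ^ N)).
  - rewrite SL_const, <- Rpow_mult_distr, n_times_q, pow1; ring.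
  - intro s; destruct (Nat.leb m (ndistinct s)); simpl; ring.
Qed.

Lemma unreached_nonneg (N : nat) : 0 <= unreached N.
Proof.
  apply sumR_map_nonneg; intro s.
  apply Rmult_le_pos; [apply ind_nonneg | apply q_pow_nonneg].
Qed.

(* Union bound over the n possibly missing values. *)
Lemma unreached_bound (N : nat) : unreached N <= INR n * ((INR n - 1) * q) ^ N.
Proof.
  unfold unreached.
  eapply Rle_trans.
  { apply SL_le. intro s. apply Rmult_le_compat_r; [apply q_pow_nonneg|].
    apply (union_bound_missing n m s Hmn). }
  unfold SL. rewrite (sumR_map_ext _ (fun s => sumR (map (fun x =>
     ind (negb (existsb (Nat.eqb x) s)) * q ^ N) (seq 0 n))))
    by (intro s; rewrite Rmult_comm, <- sumR_map_scal; apply sumR_map_ext; intro; ring).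
  rewrite sumR_swap, (sumR_map_ext_in _ (fun _ => (INR n - 1) ^ N * q ^ N)).
  - rewrite sumR_map_const, length_seq, Rpow_mult_distr. lra.
  - intros x Hx. apply in_seq in Hx. apply SL_avoiding. lia.
Qed.

(* Partial sums equal 1 - unreached N, which tends to 0 geometrically. *)
Lemma Em_one : Em_sum n m (fun _ => 1) 1.
Proof.
  intros eps Heps.
  set (r := (INR n - 1) * q).
  assert (Hr : Rabs r < 1).
  { assert (0 <= r < 1).
    { unfold r. pose proof n_times_q. pose proof n_pos.
      assert (0 < q) by (apply Rinv_0_lt_compat; lra).
      assert (1 <= INR n) by (apply (le_INR 1); lia). nra. }
    rewrite Rabs_right; lra. }
  pose proof n_pos.
  destruct (pow_lt_1_zero r Hr (eps / INR n)) as [N HN]; [apply Rdiv_lt_0_compat; lra|].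
  exists N; intros k Hk. unfold Rdist.
  rewrite partial_sums_one.
  replace (reached k - 1) with (- unreached k) by (pose proof (reached_plus_unreached k); lra).
  rewrite Rabs_Ropp, Rabs_right by (apply Rle_ge, unreached_nonneg).
  specialize (HN k Hk). pose proof (unreached_bound k) as Hb. fold r in Hb.
  apply Rle_lt_trans with (INR n * Rabs (r ^ k)).
  - eapply Rle_trans; [exact Hb|]. apply Rmult_le_compat_l; [lra | apply RRle_abs].
  - apply Rmult_lt_reg_r with (/ INR n); [apply Rinv_0_lt_compat; lra|].
    replace (INR n * Rabs (r ^ k) * / INR n) with (Rabs (r ^ k)) by (field; lra).
    exact HN.
Qed.

End Termination.

Lemma infinite_sum_ext (f g : nat -> R) (v : R) :
  (forall L, f L = g L) -> infinite_sum f v -> infinite_sum g v.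
Proof. intros H Hf. apply (Un_cv_ext (sum_f_R0 f)); [intro; apply sum_eq; auto | exact Hf]. Qed.

Lemma infinite_sum_plus (f g : nat -> R) (a b : R) :
  infinite_sum f a -> infinite_sum g b -> infinite_sum (fun L => f L + g L) (a + b).
Proof.
  intros Hf Hg. apply (Un_cv_ext (fun N => sum_f_R0 f N + sum_f_R0 g N)).
  - intro; symmetry; apply sum_plus.
  - apply CV_plus; assumption.
Qed.

Lemma infinite_sum_scal (c : R) (f : nat -> R) (a : R) :
  infinite_sum f a -> infinite_sum (fun L => c * f L) (c * a).
Proof.
  intro Hf. apply (Un_cv_ext (fun N => c * sum_f_R0 f N)).
  - intro N; rewrite scal_sum; apply sum_eq; intros; ring.
  - apply (CV_mult (fun _ => c)); [|exact Hf].
    intros eps He; exists 0%nat; intros; unfold Rdist. rewrite Rminus_diag, Rabs_R0; lra.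
Qed.

Lemma infinite_sum_zero : infinite_sum (fun _ => 0) 0.
Proof.
  intros eps He; exists 0%nat; intros N _. unfold Rdist.
  rewrite sum_cte, Rmult_0_l, Rminus_diag, Rabs_R0; lra.
Qed.

Lemma infinite_sum_list {A} (h : A -> nat -> R) (b : A -> R) (l : list A) :
  (forall j, In j l -> infinite_sum (h j) (b j)) ->
  infinite_sum (fun L => sumR (map (fun j => h j L) l)) (sumR (map b l)).
Proof.
  induction l as [|j l IH]; intro H; simpl; [apply infinite_sum_zero|].
  apply infinite_sum_plus; [apply H, in_eq | apply IH; intros; apply H, in_cons; assumption].
Qed.

Lemma Em_slice_ext_Xm (n m : nat) (f g : list nat -> R) (L : nat) :
  (forall s, in_Xm m s = true -> f s = g s) -> Em_slice n m f L = Em_slice n m g L.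
Proof.
  intro H. unfold Em_slice. apply sumR_map_ext_in.
  intros s Hs. apply filter_In in Hs. rewrite H by apply Hs. reflexivity.
Qed.

Lemma Em_slice_plus (n m : nat) (f g : list nat -> R) (L : nat) :
  Em_slice n m (fun s => f s + g s) L = Em_slice n m f L + Em_slice n m g L.
Proof. unfold Em_slice. rewrite <- sumR_map_plus. apply sumR_map_ext; intro; ring. Qed.

Lemma Em_slice_scal (n m : nat) (c : R) (f : list nat -> R) (L : nat) :
  Em_slice n m (fun s => c * f s) L = c * Em_slice n m f L.
Proof. unfold Em_slice. rewrite <- sumR_map_scal. apply sumR_map_ext; intro; ring. Qed.

Lemma Em_slice_list {A} (n m : nat) (h : A -> list nat -> R) (l : list A) (L : nat) :
  Em_slice n m (fun s => sumR (map (fun j => h j s) l)) L =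
  sumR (map (fun j => Em_slice n m (h j) L) l).
Proof.
  induction l as [|j l IH]; simpl.
  - unfold Em_slice. rewrite (sumR_map_ext _ (fun _ => 0)) by (intro; ring).
    rewrite sumR_map_const; ring.
  - rewrite <- IH. apply Em_slice_plus.
Qed.

Lemma Em_sum_ext_Xm (n m : nat) (f g : list nat -> R) (v : R) :
  (forall s, in_Xm m s = true -> f s = g s) -> Em_sum n m f v -> Em_sum n m g v.
Proof. intro H. apply infinite_sum_ext. intro; apply Em_slice_ext_Xm, H. Qed.

Lemma Em_sum_plus (n m : nat) (f g : list nat -> R) (a b : R) :
  Em_sum n m f a -> Em_sum n m g b -> Em_sum n m (fun s => f s + g s) (a + b).
Proof.
  intros Hf Hg. eapply infinite_sum_ext; [|exact (infinite_sum_plus _ _ _ _ Hf Hg)].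
  intro; symmetry; apply Em_slice_plus.
Qed.

Lemma Em_sum_scal (n m : nat) (c : R) (f : list nat -> R) (a : R) :
  Em_sum n m f a -> Em_sum n m (fun s => c * f s) (c * a).
Proof.
  intro Hf. eapply infinite_sum_ext; [|exact (infinite_sum_scal c _ _ Hf)].
  intro; symmetry; apply Em_slice_scal.
Qed.

Lemma Em_sum_list {A} (n m : nat) (h : A -> list nat -> R) (b : A -> R) (l : list A) :
  (forall j, In j l -> Em_sum n m (h j) (b j)) ->
  Em_sum n m (fun s => sumR (map (fun j => h j s) l)) (sumR (map b l)).
Proof.
  intro H. eapply infinite_sum_ext; [|exact (infinite_sum_list _ _ l H)].
  intro; symmetry; apply Em_slice_list.
Qed.

(* Every function bounded on X_m has an expectation E_m: compare the
   nonnegative series of f + c with that of the constant 2c, which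
   converges since E_m[1] = 1. *)
Lemma Em_sum_bounded (n m : nat) (f : list nat -> R) (c : R) :
  (1 <= m)%nat -> (m <= n)%nat ->
  (forall s, in_Xm m s = true -> Rabs (f s) <= c) -> { v | Em_sum n m f v }.
Proof.
  intros Hm1 Hmn Hf.
  pose proof (Em_one n m Hm1 Hmn) as Hone.
  assert (Hcmp : forall L, 0 <= Em_slice n m (fun s => f s + c) L <= Em_slice n m (fun s => 2 * c * 1) L).
  { intro L. pose proof (q_pow_nonneg n m Hm1 Hmn L) as Hq. unfold Em_slice.
    split; [apply sumR_map_nonneg_in | apply sumR_map_le_in]; intros s Hs;
      apply filter_In in Hs as [_ Hs]; specialize (Hf s Hs);
      pose proof (Rle_abs (f s)); pose proof (Rle_abs (- f s)); rewrite Rabs_Ropp in *; nra. }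
  destruct (Rseries_CV_comp _ _ Hcmp) as [v Hv].
  { exists (2 * c * 1). exact (Em_sum_scal n m (2 * c) _ _ Hone). }
  exists (v + - c * 1).
  apply (Em_sum_ext_Xm n m (fun s => (f s + c) + - c * 1)); [intros; ring|].
  exact (Em_sum_plus n m _ _ _ _ Hv (Em_sum_scal n m (- c) _ _ Hone)).
Qed.

Theorem mainTheorem10 (n m : nat) (Hm1 : (1 <= m)%nat) (Hmn : (m <= n)%nat) :
  exists (a : R) (b : nat -> R),
    Em_sum n m (fun s => / ell s) a /\
    (forall j : nat, (1 <= j <= m - 1)%nat ->
       Em_sum n m (fun s => tau j s / ell s) (b j)) /\
    INR m * a + sumR (map b (seq 1 (m - 1))) = 1.
Proof.
  destruct (Em_sum_bounded n m (fun s => / ell s) 1 Hm1 Hmn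
              (fun s Hs => inv_ell_bound s (Xm_nonempty m s Hs))) as [a Ha].
  pose (Eb j := Em_sum_bounded n m (fun s => tau j s / ell s) 3 Hm1 Hmn
                  (fun s Hs => tau_div_ell_bound j s (Xm_nonempty m s Hs))).
  pose (b j := proj1_sig (Eb j)).
  assert (Hb : forall j, Em_sum n m (fun s => tau j s / ell s) (b j)) by (intro j; exact (proj2_sig (Eb j))).
  exists a, b. split; [exact Ha | split; [intros j _; apply Hb|]].
  (* E_m of the left-hand side, computed in two ways. *)
  assert (Hlhs : Em_sum n m
            (fun s => INR m * / ell s + sumR (map (fun j => tau j s / ell s) (seq 1 (m - 1))))
            (INR m * a + sumR (map b (seq 1 (m - 1))))).
  { apply Em_sum_plus; [apply Em_sum_scal, Ha | apply Em_sum_list; intros j _; apply Hb]. }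
  apply (uniqueness_sum (Em_slice n m (fun _ => 1))); [| exact (Em_one n m Hm1 Hmn)].
  apply (Em_sum_ext_Xm n m _ _ _ (fun s Hs => pointwise_identity m s Hm1 Hs) Hlhs).
Qed.
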